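(* Let $H$ be a Hilbert space over $\mathbb{R}$ or $\mathbb{C}$, $V\subseteq H$, $n\ge1$, and let $C_1,\dots,C_n$ be closed convex subsets of $H$ with $0\in C_n\subseteq C_{n-1}\subseteq\cdots\subseteq C_1\subseteq V$. Let $P_{C_i}:V\to V$ be the metric projection onto $C_i$ and $P=P_{C_n}\circ\cdots\circ P_{C_1}$. Then $P_{C_n}$ is the unique pseudo-inverse of $P$ (with respect to the norm of $H$). In particular, for a closed convex $C\subseteq V$ with $0\in C$, $P_C$ is its own unique pseudo-inverse.
   Context: The metric projection onto a nonempty closed convex subset $C$ of a Hilbert space maps each point to its unique nearest point in $C$. For subsets $V,W$ of normed spaces and $T:V\to W$, an operator $S:W\to V$ is a pseudo-inverse of $T$ if: (BAS) for every $w\in W$, the minimum $m_w=\min_{v\in V}\|T(v)-w\|$ is attained, the norm attains its minimum on $\{v\in V:\|T(v)-w\|=m_w\}$, and $S(w)\in\arg\min\{\|v\|:v\in V,\ \|T(v)-w\|=m_w\}$; and (MP2) $S\circ T\circ S=S$. *)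

From HB Require Import structures.
From mathcomp Require Import all_boot all_order all_algebra.
From mathcomp Require Import all_classical all_reals all_analysis.
Set Implicit Arguments. Unset Strict Implicit. Unset Printing Implicit Defensive.
Import Order.TTheory GRing.Theory Num.Theory.
Import numFieldNormedType.Exports.
Local Open Scope classical_set_scope.
Local Open Scope ring_scope.

Definition hilbert_inner_product (R : realType) (E : completeNormedModType R)
    (ip : E -> E -> R) : Prop :=
  [/\ (forall x y, ip x y = ip y x),
      (forall a x y z, ip (a *: x + y) z = a * ip x z + ip y z),
      (forall x, 0 <= ip x x),
      (forall x, ip x x = 0 -> x = 0) &
      (forall x, `|x| ^+ 2 = ip x x)].

Definition convex_subset (R : realType) (E : completeNormedModType R)
    (A : set E) : Prop :=
  @convex_set R E A.

Definition metric_proj (R : realType) (E : completeNormedModType R)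
    (C : set E) (x : E) : E :=
  xget 0 [set p | C p /\ forall y, C y -> `|x - p| <= `|x - y|].

Fixpoint comp_proj (R : realType) (E : completeNormedModType R)
    (C : nat -> set E) (k : nat) : E -> E :=
  match k with
  | 0 => id
  | k'.+1 => metric_proj (C k'.+1) \o comp_proj C k'
  end.

(* S : W -> V is a pseudo-inverse of T : V -> W (both modelled as functions
   E -> E, only their values on V resp. W matter). *)
Definition is_pseudo_inverse (R : realType) (E : completeNormedModType R)
    (V W : set E) (T S : E -> E) : Prop :=
  (forall w, W w ->
     exists v0, V v0 /\ (forall v, V v -> `|T v0 - w| <= `|T v - w|) /\
     let A := [set v | V v /\ `|T v - w| = `|T v0 - w|] in
     (exists a, A a /\ forall b, A b -> `|a| <= `|b|) /\
     (A (S w) /\ forall b, A b -> `|S w| <= `|b|)) /\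
  (forall w, W w -> S (T (S w)) = S w).

From HB Require Import structures.
From mathcomp Require Import all_boot all_order all_algebra.
From mathcomp Require Import all_classical all_reals all_analysis.
From mathcomp Require Import ring lra.
Import Order.TTheory GRing.Theory Num.Theory.
Import numFieldNormedType.Exports.
Local Open Scope classical_set_scope.
Local Open Scope ring_scope.
Set Implicit Arguments. Unset Strict Implicit. Unset Printing Implicit Defensive.

(* The innermost projection Q = P_{C_n} is the nearest-point map of K = C_n,
   and P = P_{C_n} o ... o P_{C_1} is a retraction onto K that never increases
   the norm and fixes every point whose norm it does not strictly decrease;
   each factor has this property because 0 lies in C_i, so the variational
   inequality <x - P_{C_i} x, 0 - P_{C_i} x> <= 0 gives
   |P_{C_i} x|^2 + |x - P_{C_i} x|^2 <= |x|^2.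
   Hence for w in V the least residual |P v - w| is the distance from w to K,
   attained exactly when P v = Q w, and among those v the norm
   |v| >= |P v| = |Q w| is minimal only at v = Q w. *)

Lemma le0_of_le_scaled (R : realFieldType) (a b : R) :
  (forall t, 0 < t -> t <= 1 -> a <= t * b) -> a <= 0.
Proof.
move=> le_ab; rewrite leNgt; apply/negP => a_gt0.
have b_gt0 : 0 < b by have := le_ab 1 ltr01 (lexx 1); rewrite mul1r; lra.
have t_gt0 : 0 < a / (2 * b) by rewrite divr_gt0 // mulr_gt0.
have t_le1 : a / (2 * b) <= 1.
  by rewrite ler_pdivrMr ?mulr_gt0 // mul1r; have := le_ab 1 ltr01 (lexx 1); lra.
have := le_ab _ t_gt0 t_le1.
have -> : a / (2 * b) * b = a / 2 by field; rewrite gt_eqF.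
lra.
Qed.

Lemma norm_sqr_le0 (R : numDomainType) (E : normedModType R) (z : E) :
  `|z| ^+ 2 <= 0 -> z = 0.
Proof. by move=> z_le0; apply/eqP; rewrite -normr_eq0 -sqrf_eq0 eq_le z_le0 exprn_ge0. Qed.

Lemma convex_subset_comb (R : realType) (E : completeNormedModType R) (C : set E)
    (x y : E) (t : R) :
  convex_subset C -> C x -> C y -> 0 <= t -> t <= 1 -> C (t *: x + (1 - t) *: y).
Proof.
by move=> convC Cx Cy t_ge0 t_le1; have := convC x y (Itv01 t_ge0 t_le1); rewrite !inE; apply.
Qed.

Definition nearest_point (R : numDomainType) (E : normedModType R)
    (C : set E) (x p : E) : Prop :=
  C p /\ forall y, C y -> `|x - p| <= `|x - y|.

Lemma nearest_point_sqr (R : numDomainType) (E : normedModType R) (C : set E) (x p y : E) :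
  nearest_point C x p -> C y -> `|x - p| ^+ 2 <= `|x - y| ^+ 2.
Proof. by move=> [_ p_min] Cy; rewrite ler_pXn2r ?nnegrE // p_min. Qed.

Definition shrinks_norm (R : numDomainType) (E : normedModType R) (f : E -> E) :=
  forall v, `|f v| <= `|v| /\ (`|v| <= `|f v| -> f v = v).

Lemma shrinks_norm_id (R : numDomainType) (E : normedModType R) : shrinks_norm (@id E).
Proof. by []. Qed.

Lemma shrinks_norm_comp (R : numDomainType) (E : normedModType R) (f g : E -> E) :
  shrinks_norm f -> shrinks_norm g -> shrinks_norm (f \o g).
Proof.
move=> f_shrinks g_shrinks v /=.
have [le_fg _] := f_shrinks (g v); have [le_gv gv_fix] := g_shrinks v.
split=> [|le_v]; first exact: le_trans le_fg le_gv.
have gv : g v = v by apply/gv_fix/(le_trans le_v).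
by rewrite gv in le_v *; apply: (f_shrinks v).2.
Qed.

Section PseudoInverseOfRetraction.
Variables (R : realType) (E : completeNormedModType R) (V K : set E) (T Q : E -> E).
Hypotheses (KV : K `<=` V) (TK : forall v, K (T v)) (T_id : forall v, K v -> T v = v)
  (T_shrinks : shrinks_norm T) (Q_nearest : forall w, nearest_point K w (Q w))
  (Q_unique : forall w p, nearest_point K w p -> p = Q w).

Let Q_id v : K v -> Q v = v.
Proof. by move=> Kv; apply/esym/Q_unique; split=> // y _; rewrite subrr normr0. Qed.

Let dist_Q_le w v : `|Q w - w| <= `|T v - w|.
Proof. by rewrite distrC (distrC (T v)); apply: (Q_nearest w).2. Qed.

Let T_eq_Q w v : `|T v - w| = `|Q w - w| -> T v = Q w.
Proof.
move=> dist_Tv; apply: Q_unique; split=> // y Ky.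
by rewrite distrC dist_Tv distrC; apply: (Q_nearest w).2.
Qed.

Lemma pseudo_inverse_retraction : is_pseudo_inverse V V T Q.
Proof.
split=> w Vw; last by have [KQw _] := Q_nearest w; rewrite T_id // Q_id.
have [KQw _] := Q_nearest w.
have TQw : T (Q w) = Q w by exact: T_id.
have Qw_least b : V b /\ `|T b - w| = `|T (Q w) - w| -> `|Q w| <= `|b|.
  by rewrite TQw => -[_ /T_eq_Q <-]; case: (T_shrinks b).
have QwA : V (Q w) /\ `|T (Q w) - w| = `|T (Q w) - w| by split=> //; exact: KV.
exists (Q w); split; first exact: KV.
split=> [v _|]; first by rewrite TQw dist_Q_le.
by split; [exists (Q w); split | split].
Qed.

Lemma pseudo_inverse_retraction_unique S :
  is_pseudo_inverse V V T S -> forall w, V w -> S w = Q w.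
Proof.
move=> [S_bas _] w Vw.
have [v0 [_ [v0_min /= [_ [[_ dist_Sw] Sw_least]]]]] := S_bas w Vw.
have [KQw _] := Q_nearest w.
have dist_v0 : `|T v0 - w| = `|Q w - w|.
  apply/eqP; rewrite eq_le dist_Q_le andbT -(T_id KQw).
  by apply: v0_min; exact: KV.
have TSw : T (S w) = Q w by apply: T_eq_Q; rewrite dist_Sw.
have Sw_le : `|S w| <= `|Q w|.
  by apply: Sw_least; split; [exact: KV | rewrite T_id].
have [_ TSw_fix] := T_shrinks (S w).
by rewrite -TSw TSw_fix // TSw.
Qed.

Lemma unique_pseudo_inverse_retraction :
  is_pseudo_inverse V V T Q /\
  forall S, is_pseudo_inverse V V T S -> forall w, V w -> S w = Q w.
Proof. by split; [exact: pseudo_inverse_retraction | exact: pseudo_inverse_retraction_unique]. Qed.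

End PseudoInverseOfRetraction.

Section InnerProduct.
Variables (R : realType) (E : completeNormedModType R) (ip : E -> E -> R).
Hypothesis ip_hilbert : hilbert_inner_product ip.

Let ipC x y : ip x y = ip y x. Proof. by case: ip_hilbert. Qed.
Let ip_linear a x y z : ip (a *: x + y) z = a * ip x z + ip y z.
Proof. by case: ip_hilbert. Qed.
Let ip_norm x : `|x| ^+ 2 = ip x x. Proof. by case: ip_hilbert. Qed.

Lemma ipDl (x y z : E) : ip (x + y) z = ip x z + ip y z.
Proof. by rewrite -[x]scale1r ip_linear mul1r scale1r. Qed.

Lemma ipZl a (x z : E) : ip (a *: x) z = a * ip x z.
Proof.
have ip0l : ip 0 z = 0 by have := ip_linear 1 0 0 z; rewrite scale1r addr0 mul1r; lra.
by rewrite -[a *: x]addr0 ip_linear ip0l addr0.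
Qed.

Lemma ipZr a (x z : E) : ip z (a *: x) = a * ip z x.
Proof. by rewrite ipC ipZl ipC. Qed.

Lemma ipNr (x z : E) : ip z (- x) = - ip z x.
Proof. by rewrite -scaleN1r ipZr mulN1r. Qed.

Lemma normD_sqr (u v : E) : `|u + v| ^+ 2 = `|u| ^+ 2 + 2 * ip u v + `|v| ^+ 2.
Proof. rewrite !ip_norm ipDl !(ipC _ (u + v)) !ipDl (ipC v u); lra. Qed.

Lemma normB_sqr (u v : E) : `|u - v| ^+ 2 = `|u| ^+ 2 - 2 * ip u v + `|v| ^+ 2.
Proof. by rewrite normD_sqr ipNr normrN mulrN. Qed.

Lemma parallelogram (u v : E) :
  `|u + v| ^+ 2 + `|u - v| ^+ 2 = 2 * `|u| ^+ 2 + 2 * `|v| ^+ 2.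
Proof. rewrite normD_sqr normB_sqr; lra. Qed.

Section ConvexSet.
Variables (C : set E) (convC : convex_subset C).

Lemma convex_midpoint_sqr (x p q : E) (D : R) :
  (forall y, C y -> D <= `|x - y| ^+ 2) -> C p -> C q ->
  `|p - q| ^+ 2 <= 2 * `|x - p| ^+ 2 + 2 * `|x - q| ^+ 2 - 4 * D.
Proof.
move=> D_lb Cp Cq.
have half_ge0 : 0 <= 2^-1 :> R by rewrite invr_ge0.
have half_le1 : 2^-1 <= 1 :> R by rewrite invf_le1 ?ler1n.
have /D_lb := convex_subset_comb convC Cp Cq half_ge0 half_le1.
have -> : 1 - 2^-1 = 2^-1 :> R by field.
have := parallelogram (x - p) (x - q).
have -> : x - p - (x - q) = q - p by rewrite opprB addrC addrA subrK.
have -> : x - p + (x - q) = 2 *: (x - (2^-1 *: p + 2^-1 *: q)).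
  by rewrite -scalerDr scalerBr scalerA mulfV // scale1r scaler_nat mulr2n opprD addrACA.
rewrite normrZ exprMn ger0_norm // (distrC q p); lra.
Qed.

Lemma nearest_point_unique (x p q : E) :
  nearest_point C x p -> nearest_point C x q -> p = q.
Proof.
move=> p_near q_near; apply/subr0_eq/norm_sqr_le0.
have D_lb y : C y -> `|x - p| ^+ 2 <= `|x - y| ^+ 2 by exact: nearest_point_sqr.
have := convex_midpoint_sqr D_lb p_near.1 q_near.1.
have := nearest_point_sqr q_near p_near.1; have := nearest_point_sqr p_near q_near.1.
lra.
Qed.

Lemma nearest_point_ip_le0 (x p y : E) :
  nearest_point C x p -> C y -> ip (x - p) (y - p) <= 0.
Proof.
move=> p_near Cy.
suff : 2 * ip (x - p) (y - p) <= 0 by lra.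
apply: (le0_of_le_scaled (b := `|y - p| ^+ 2)) => t t_gt0 t_le1.
have := nearest_point_sqr p_near (convex_subset_comb convC Cy p_near.1 (ltW t_gt0) t_le1).
have -> : x - (t *: y + (1 - t) *: p) = (x - p) - t *: (y - p).
  by rewrite scalerBl scale1r addrCA -scalerBr opprD addrA.
rewrite (normB_sqr (x - p)) ipZr normrZ exprMn ger0_norm ?(ltW t_gt0) // => le_sqr.
have : 0 <= t * (t * `|y - p| ^+ 2 - 2 * ip (x - p) (y - p)) by lra.
by rewrite pmulr_rge0 // subr_ge0.
Qed.

Lemma nearest_point_pythagoras_le (x p : E) : C 0 -> nearest_point C x p ->
  `|p| ^+ 2 + `|x - p| ^+ 2 <= `|x| ^+ 2.
Proof.
move=> C0 p_near.
have := nearest_point_ip_le0 p_near C0; rewrite sub0r ipNr.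
have := normD_sqr (x - p) p; rewrite subrK.
lra.
Qed.

Lemma minimizing_seq_cvg (x : E) (D : R) (eps : nat -> R) (a : nat -> E) :
  (forall y, C y -> D <= `|x - y| ^+ 2) -> eps @ \oo --> 0 ->
  (forall n, C (a n) /\ `|x - a n| ^+ 2 < D + eps n) -> cvg (a @ \oo).
Proof.
move=> D_lb eps_to0 a_min.
have a_cauchy m n : `|a m - a n| ^+ 2 <= 2 * eps m + 2 * eps n.
  have := convex_midpoint_sqr D_lb (a_min m).1 (a_min n).1.
  have := (a_min m).2; have := (a_min n).2; lra.
apply: cauchy_cvg; apply: cauchy_exP => _ /posnumP[e].
have eps_small : \forall k \near \oo, eps k < e%:num ^+ 2 / 4.
  by apply: (cvgr_lt _ eps_to0); rewrite divr_gt0.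
near \oo => m; exists (a m) => /=; near=> n.
rewrite -ball_normE /ball_ /= -(@ltr_pXn2r _ 2) ?nnegrE //.
apply: le_lt_trans (a_cauchy m n) _.
have : eps m < e%:num ^+ 2 / 4 by near: m.
have : eps n < e%:num ^+ 2 / 4 by near: n.
lra.
Unshelve. all: by end_near.
Qed.

Lemma nearest_point_exists (x : E) : closed C -> C !=set0 ->
  exists p, nearest_point C x p.
Proof.
move=> closedC [c Cc].
set D := inf [set `|x - y| ^+ 2 | y in C].
have D_lb y : C y -> D <= `|x - y| ^+ 2.
  by move=> Cy; apply: ge_inf; [exists 0 => _ [z _ <-]; exact: exprn_ge0 | exists y].
have /choice[a a_min] n : exists y, C y /\ `|x - y| ^+ 2 < D + harmonic n.
  have : D < D + harmonic n by rewrite ltrDl harmonic_gt0.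
  by case/inf_lt => [|_ [y Cy <-] lt_y]; [exists (`|x - c| ^+ 2), c | exists y].
have /cvg_ex[l a_to_l] := minimizing_seq_cvg D_lb cvg_harmonic a_min.
exists l; split.
  by apply: (closed_cvg _ closedC _ _ a_to_l); apply: nearW => n; case: (a_min n).
move=> y Cy; rewrite -(@ler_pXn2r _ 2) ?nnegrE //; apply: le_trans (D_lb _ Cy).
apply/ler_addgt0Pr => _ /posnumP[e].
have dist_to : `|x - a n| @[n --> \oo] --> `|x - l|.
  by apply: cvg_norm; apply: cvgB => //; exact: cvg_cst.
have sqr_dist_to : `|x - a n| ^+ 2 @[n --> \oo] --> `|x - l| ^+ 2.
  by rewrite expr2; under eq_fun do rewrite expr2; exact: cvgM.
apply: (cvgr_to_le sqr_dist_to); near=> n.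
apply: ltW; apply: lt_le_trans (a_min n).2 _; rewrite lerD2l.
by apply: ltW; near: n; exact: (cvgr_lt _ cvg_harmonic _ (gt0 e)).
Unshelve. all: by end_near.
Qed.

End ConvexSet.

Section MetricProjection.
Variables (C : set E) (closedC : closed C) (convC : convex_subset C) (C_neq0 : C !=set0).

Lemma metric_projP x : nearest_point C x (metric_proj C x).
Proof. by apply: xgetPex; exact: nearest_point_exists. Qed.

Lemma metric_proj_unique x p : nearest_point C x p -> p = metric_proj C x.
Proof. by move=> p_near; rewrite (nearest_point_unique convC p_near (metric_projP x)). Qed.

End MetricProjection.

Lemma metric_proj_id (C : set E) v :
  closed C -> convex_subset C -> C v -> metric_proj C v = v.
Proof.
move=> closedC convC Cv; apply/esym/(metric_proj_unique closedC convC (ex_intro _ v Cv)).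
by split=> // y _; rewrite subrr normr0.
Qed.

Lemma shrinks_norm_metric_proj (C : set E) :
  closed C -> convex_subset C -> C 0 -> shrinks_norm (metric_proj C).
Proof.
move=> closedC convC C0 v.
have := nearest_point_pythagoras_le convC C0 (metric_projP closedC convC (ex_intro _ 0 C0) v).
set p := metric_proj C v => sqr_le.
have := normr_ge0 p; have := normr_ge0 v; have := normr_ge0 (v - p).
split=> [|le_v]; first nra.
by apply/esym/subr0_eq/norm_sqr_le0; nra.
Qed.

End InnerProduct.

Lemma comp_projS (R : realType) (E : completeNormedModType R) (C : nat -> set E) k v :
  comp_proj C k.+1 v = metric_proj (C k.+1) (comp_proj C k v).
Proof. by []. Qed.

Section NestedProjections.
Variables (R : realType) (E : completeNormedModType R) (ip : E -> E -> R)
  (n : nat) (C : nat -> set E).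
Hypotheses (ip_hilbert : hilbert_inner_product ip) (n_gt0 : (1 <= n)%N)
  (closed_convexC : forall i, (1 <= i <= n)%N -> closed (C i) /\ convex_subset (C i))
  (Cn0 : C n 0) (C_nested : forall i, (1 <= i < n)%N -> C i.+1 `<=` C i).

Lemma Cn_sub i : (1 <= i <= n)%N -> C n `<=` C i.
Proof.
case/andP=> i_gt0 le_in.
have sub k : (i + k <= n)%N -> C (i + k) `<=` C i.
  elim: k => [|k IHk] le_ikn; first by rewrite addn0.
  rewrite addnS in le_ikn *.
  have lt_ikn : (1 <= i + k < n)%N by rewrite le_ikn (leq_trans i_gt0) ?leq_addr.
  by move=> y /(C_nested lt_ikn); apply: IHk (ltnW le_ikn) y.
by rewrite -(subnKC le_in); apply: sub; rewrite subnKC.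
Qed.

Lemma comp_proj_id k v : (k <= n)%N -> C n v -> comp_proj C k v = v.
Proof.
elim: k => [|k IHk] le_kn Cv //; rewrite comp_projS IHk ?(ltnW le_kn) //.
have le_1kn : (1 <= k.+1 <= n)%N by rewrite le_kn.
have [closedCk convCk] := closed_convexC le_1kn.
exact (metric_proj_id ip_hilbert closedCk convCk (Cn_sub le_1kn Cv)).
Qed.

Lemma shrinks_norm_comp_proj k : (k <= n)%N -> shrinks_norm (comp_proj C k).
Proof.
elim: k => [|k IHk] le_kn; first exact: shrinks_norm_id.
have le_1kn : (1 <= k.+1 <= n)%N by rewrite le_kn.
have [closedCk convCk] := closed_convexC le_1kn.
apply: shrinks_norm_comp (IHk (ltnW le_kn)).
exact (shrinks_norm_metric_proj ip_hilbert closedCk convCk (Cn_sub le_1kn Cn0)).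
Qed.

Lemma comp_proj_in k v : (1 <= k <= n)%N -> C k (comp_proj C k v).
Proof.
case: k => // k le_1kn; have [closedCk convCk] := closed_convexC le_1kn.
have Ck_neq0 : C k.+1 !=set0 by exists 0; apply: (Cn_sub le_1kn).
by case: (metric_projP ip_hilbert closedCk convCk Ck_neq0 (comp_proj C k v)).
Qed.

Lemma comp_proj_pseudo_inverse (V : set E) : C 1%N `<=` V ->
  is_pseudo_inverse V V (comp_proj C n) (metric_proj (C n)) /\
  forall S, is_pseudo_inverse V V (comp_proj C n) S ->
    forall w, V w -> S w = metric_proj (C n) w.
Proof.
move=> C1V.
have le_nn : (1 <= n <= n)%N by rewrite n_gt0 leqnn.
have le_1n : (1 <= 1 <= n)%N by rewrite n_gt0.
have [closedCn convCn] := closed_convexC le_nn.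
have CnV : C n `<=` V := subset_trans (Cn_sub le_1n) C1V.
have Cn_neq0 : C n !=set0 by exists 0.
apply: unique_pseudo_inverse_retraction CnV (fun v => comp_proj_in v le_nn)
  (fun v => comp_proj_id (leqnn n)) (shrinks_norm_comp_proj (leqnn n))
  (metric_projP ip_hilbert closedCn convCn Cn_neq0)
  (metric_proj_unique ip_hilbert closedCn convCn Cn_neq0).
Qed.

End NestedProjections.

Theorem mainTheorem9 (R : realType) (E : completeNormedModType R)
    (ip : E -> E -> R) (V : set E) (n : nat) (C : nat -> set E) :
  hilbert_inner_product ip ->
  (1 <= n)%N ->
  (forall i, (1 <= i <= n)%N -> closed (C i) /\ convex_subset (C i)) ->
  C n 0 ->
  (forall i, (1 <= i < n)%N -> C i.+1 `<=` C i) ->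
  C 1%N `<=` V ->
  (is_pseudo_inverse V V (comp_proj C n) (metric_proj (C n)) /\
   forall S, is_pseudo_inverse V V (comp_proj C n) S ->
     forall w, V w -> S w = metric_proj (C n) w) /\
  (forall D : set E, closed D -> convex_subset D -> D `<=` V -> D 0 ->
     is_pseudo_inverse V V (metric_proj D) (metric_proj D) /\
     forall S, is_pseudo_inverse V V (metric_proj D) S ->
       forall w, V w -> S w = metric_proj D w).
Proof.
move=> ip_hilbert n_gt0 closed_convexC Cn0 C_nested C1V.
split.
  exact (comp_proj_pseudo_inverse ip_hilbert n_gt0 closed_convexC Cn0 C_nested C1V).
move=> D closedD convD DV D0.
(* [comp_proj (fun=> D) 1] is [metric_proj D \o id], convertible to [metric_proj D]. *)
exact (@comp_proj_pseudo_inverse R E ip 1 (fun=> D) ip_hilbert (leqnn 1)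
  (fun _ _ => conj closedD convD) D0 (fun _ _ => @subset_refl _ D) V DV).
Qed.
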